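(* For every $n\ge1$ and every LHS assemblage $\{\rho_{b|y}\}$ on $\mathbb C^2$, $$|\mathsf W_n|\ \le\ \frac{\sin\left(\frac{\pi}{2}\mathsf T_n\right)}{n\sin\left(\frac{\pi}{2n}\right)}.$$
   Context: Let $\theta_y=y\pi/n$. An LHS assemblage on $\mathbb C^2$ with inputs $y\in\{0,\dots,n-1\}$ and outcomes $b\in\{0,1,\varnothing\}$ is $\rho_{b|y}=\sum_\lambda p(b|y,\lambda)\rho_\lambda$, where $\{\rho_\lambda\}$ is a finite family of positive semidefinite $2\times2$ matrices with $\sum_\lambda\mathrm{tr}\rho_\lambda=1$ and $p(b|y,\lambda)$ are conditional probabilities. With $Z,X$ the Pauli matrices, $\mathsf W_n:=\frac1n\sum_{y=0}^{n-1}\mathrm{tr}\big[(\cos\theta_y Z+\sin\theta_y X)(\rho_{0|y}-\rho_{1|y})\big]$ and $\mathsf T_n:=\frac1n\sum_{y=0}^{n-1}\mathrm{tr}(\rho_{0|y}+\rho_{1|y})$. *)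

From HB Require Import structures.
From mathcomp Require Import all_boot all_order all_algebra.
From mathcomp Require Import all_classical all_reals.
From mathcomp Require Import trigo.
From mathcomp Require Import complex.
Set Implicit Arguments. Unset Strict Implicit. Unset Printing Implicit Defensive.
Import Order.TTheory GRing.Theory Num.Theory.
Local Open Scope ring_scope.
Local Open Scope complex_scope.

Definition adj_mx (R : realType) m k (A : 'M[R[i]]_(m, k)) : 'M[R[i]]_(k, m) :=
  \matrix_(i, j) (A j i)^*.

(* positive semidefinite 2x2 complex matrix: Hermitian with
   nonnegative quadratic form (0 <= z in R[i] means z is real and >= 0) *)
Definition psd2 (R : realType) (A : 'M[R[i]]_2) : Prop :=
  adj_mx A = A /\ forall v : 'cV[R[i]]_2, 0 <= (adj_mx v *m A *m v) 0 0.

Definition pauliZ (R : realType) : 'M[R[i]]_2 :=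
  \matrix_(i < 2, j < 2) (if i == j then (if val i == 0%N then 1 else -1) else 0).
Definition pauliX (R : realType) : 'M[R[i]]_2 :=
  \matrix_(i < 2, j < 2) (if i == j then 0 else 1).

Definition theta (R : realType) (n : nat) (y : nat) : R := (y%:R * pi) / n%:R.

(* outcomes b in {0, 1, \varnothing}, encoded as 'I_3 with 2 = \varnothing *)
Definition out0 : 'I_3 := @Ordinal 3 0 isT.
Definition out1 : 'I_3 := @Ordinal 3 1 isT.

(* LHS assemblage given by a finite family rho : 'I_m -> 2x2 matrices and
   conditional probabilities p y lambda b *)
Definition is_LHS (R : realType) (n m : nat) (rho : 'I_m -> 'M[R[i]]_2)
  (p : 'I_n -> 'I_m -> 'I_3 -> R) : Prop :=
  (forall l, psd2 (rho l)) /\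
  \sum_(l < m) \tr (rho l) = 1 /\
  (forall y l b, 0 <= p y l b) /\
  (forall y l, \sum_(b < 3) p y l b = 1).

Definition assemb (R : realType) (n m : nat) (rho : 'I_m -> 'M[R[i]]_2)
  (p : 'I_n -> 'I_m -> 'I_3 -> R) (b : 'I_3) (y : 'I_n) : 'M[R[i]]_2 :=
  \sum_(l < m) (p y l b)%:C *: rho l.

(* W_n and T_n; the traces involved are real (Hermitian matrices), and we take
   their real parts to view them in R *)
Definition W_n (R : realType) (n m : nat) (rho : 'I_m -> 'M[R[i]]_2)
  (p : 'I_n -> 'I_m -> 'I_3 -> R) : R :=
  n%:R^-1 * \sum_(y < n) complex.Re (\tr
    (((cos (@theta R n y))%:C *: pauliZ R + (sin (@theta R n y))%:C *: pauliX R)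
      *m (assemb rho p out0 y - assemb rho p out1 y))).

Definition T_n (R : realType) (n m : nat) (rho : 'I_m -> 'M[R[i]]_2)
  (p : 'I_n -> 'I_m -> 'I_3 -> R) : R :=
  n%:R^-1 * \sum_(y < n) complex.Re (\tr (assemb rho p out0 y + assemb rho p out1 y)).

From HB Require Import structures.
From mathcomp Require Import all_boot all_order all_algebra.
From mathcomp Require Import all_classical all_reals.
From mathcomp Require Import topology normedtype derive realfun.
From mathcomp Require Import trigo complex ring lra.
Import Order.TTheory GRing.Theory Num.Theory numFieldNormedType.Exports.
Set Implicit Arguments. Unset Strict Implicit. Unset Printing Implicit Defensive.
Local Open Scope ring_scope.

(* Put [q = p0 + p1], [d = p0 - p1] (so [|d| <= q <= 1]) and describe each
   [rho_l] by [t = tr rho_l], [z = tr (Z rho_l)], [x = tr (X rho_l)], which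
   satisfy [z^2 + x^2 <= t^2].  Then [n |W_n|] is at most
   [sum_l t_l sum_y q_(y,l) |cos (theta_y - phi_l)|], and the [n] angles
   [theta_y - phi_l] are equally spaced on a half period of [|cos|].  Rotating
   them into [[-pi/2, pi/2]] and writing [2 cos g sin h = sin (g + h) - sin (g - h)]
   with [h = pi / (2n)], the sum telescopes; comparing [sin] with its tangent
   at [a = pi T_n / 2] bounds the [l]-th term by [sin a + (h sum_y q - a) cos a],
   times [sin h].  This bound is affine in the weights [q], so averaging over
   [l] with weights [t_l] gives exactly [sin a]. *)

Section SineIncrements.
Variable R : realType.
Implicit Types a c g h s t x y : R.

Lemma sinB_MVT s t : s <= t ->
  exists2 c, s <= c <= t & sin t - sin s = cos c * (t - s).
Proof.
move=> st.
have [|c cI E] := @MVT_segment R sin cos s t st (fun x _ => is_derive_sin x).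
  exact/continuous_subspaceT/continuous_sin.
by exists c => //; move: cI; rewrite in_itv.
Qed.

Lemma cos_le_cos x y : 0 <= x -> y <= pi -> x <= y -> cos y <= cos x.
Proof.
move=> x0 ypi xy.
rewrite leNgt ltr_cos ?in_itv /= ?x0 ?(le_trans xy) ?(le_trans x0) //; lra.
Qed.

Lemma sin_increment_ge a s t : a <= pi -> - a <= s -> s <= t -> t <= a ->
  (t - s) * cos a <= sin t - sin s.
Proof.
move=> api sa st ta; have [c /andP[sc ct] ->] := sinB_MVT st.
rewrite [_ * cos a]mulrC ler_wpM2r ?subr_ge0 // -(cos_norm c).
by apply: cos_le_cos; rewrite ?normr_ge0 ?ler_norml //; lra.
Qed.

Lemma sin_increment_le_right a s t : 0 <= a -> a <= s -> s <= t -> t <= pi ->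
  sin t - sin s <= (t - s) * cos a.
Proof.
move=> a0 sa st tpi; have [c /andP[sc ct] ->] := sinB_MVT st.
rewrite [_ * cos a]mulrC ler_wpM2r ?subr_ge0 // -(cos_norm c).
by apply: cos_le_cos; rewrite ?ger0_norm; lra.
Qed.

Lemma sin_increment_le_left a s t : 0 <= a -> - pi <= s -> s <= t -> t <= - a ->
  sin t - sin s <= (t - s) * cos a.
Proof.
move=> a0 sa st ta; have [c /andP[sc ct] ->] := sinB_MVT st.
rewrite [_ * cos a]mulrC ler_wpM2r ?subr_ge0 // -(cos_norm c).
by apply: cos_le_cos; rewrite ?ler0_norm; lra.
Qed.

Definition psi a t := sin t - t * cos a.
Definition clamp a t := Num.max (- a) (Num.min t a).

Lemma clamp_lo a t : 0 <= a -> t <= - a -> clamp a t = - a.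
Proof. by move=> a0 ta; rewrite /clamp (min_idPl _) ?(max_idPl _) //; lra. Qed.

Lemma clamp_id a t : - a <= t -> t <= a -> clamp a t = t.
Proof. by move=> aTt ta; rewrite /clamp (min_idPl _) ?(max_idPr _). Qed.

Lemma clamp_hi a t : 0 <= a -> a <= t -> clamp a t = a.
Proof. by move=> a0 ta; rewrite /clamp (min_idPr _) ?(max_idPr _) //; lra. Qed.

(* [psi a] increases on [[-a, a]] and decreases outside it, its derivative being
   [cos t - cos a]; clamping keeps only the increasing part. *)
Definition psi_clamp a t := psi a (clamp a t).

Lemma psi_clamp_increment a x y : 0 <= a -> a <= pi -> - pi <= x -> x <= y -> y <= pi ->
  0 <= psi_clamp a y - psi_clamp a x /\
  psi a y - psi a x <= psi_clamp a y - psi_clamp a x.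
Proof.
move=> a0 api px xy yp; rewrite /psi_clamp /psi.
have inner := sin_increment_ge api.
have outR := sin_increment_le_right a0.
have outL := sin_increment_le_left a0.
have full := inner _ _ (lexx (- a)) (_ : - a <= a) (lexx a).
have [xa|ax] := lerP x (- a).
  rewrite (clamp_lo a0 xa); have := outL _ _ px xa (lexx _).
  have [ya|ay] := lerP y (- a).
    rewrite (clamp_lo a0 ya); have := outL _ _ px xy ya; lra.
  have [ya'|ay'] := lerP y a.
    rewrite (clamp_id (ltW ay) ya'); have := inner _ _ (lexx _) (ltW ay) ya'; lra.
  rewrite (clamp_hi a0 (ltW ay')); have := full ltac:(lra).
  have := outR _ _ (lexx a) (ltW ay') yp; lra.
have [xa'|ax'] := lerP x a.
  rewrite (clamp_id (ltW ax) xa').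
  have [ya'|ay'] := lerP y a.
    rewrite (clamp_id (le_trans (ltW ax) xy) ya').
    have := inner _ _ (ltW ax) xy ya'; lra.
  rewrite (clamp_hi a0 (ltW ay')); have := inner _ _ (ltW ax) xa' (lexx a).
  have := outR _ _ (lexx a) (ltW ay') yp; lra.
rewrite (clamp_hi a0 (ltW ax')) (clamp_hi a0 (le_trans (ltW ax') xy)).
have := outR _ _ (ltW ax') xy yp; lra.
Qed.

Lemma psi_clamp_bounds a t : 0 <= a -> a <= pi ->
  psi a (- a) <= psi_clamp a t <= psi a a.
Proof.
move=> a0 api; rewrite /psi_clamp /psi.
have inner := sin_increment_ge api.
have [ta|aTt] := lerP t (- a).
  by rewrite (clamp_lo a0 ta); have := inner _ _ (lexx _) (_ : - a <= a) (lexx a); lra.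
have [ta'|aTt'] := lerP t a.
  rewrite (clamp_id (ltW aTt) ta').
  have := inner _ _ (lexx _) (ltW aTt) ta'; have := inner _ _ (ltW aTt) ta' (lexx a); lra.
by rewrite (clamp_hi a0 (ltW aTt')); have := inner _ _ (lexx _) (_ : - a <= a) (lexx a); lra.
Qed.

(* [2 cos g sin h = sin (g + h) - sin (g - h)] is an increment of [psi a] plus
   [2 h cos a]; passing to [psi_clamp] makes the increment nonnegative, so the
   weight [q <= 1] can only decrease it. *)
Lemma weighted_cos_sin_le a h g q : 0 <= a -> a <= pi -> 0 < h ->
  - pi <= g - h -> g + h <= pi -> 0 <= q <= 1 ->
  q * cos g * sin h <=
    q * (h * cos a) + (psi_clamp a (g + h) - psi_clamp a (g - h)) / 2.
Proof.
move=> a0 api h0 gp gp' /andP[q0 q1].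
have [] := psi_clamp_increment a0 api gp (_ : g - h <= g + h) gp'; first lra.
rewrite /psi sinD sinB; nra.
Qed.

Lemma sum_cos_window_le a h c n (q : nat -> R) :
  0 <= a -> a <= pi / 2 -> 0 < h -> h <= pi / 2 ->
  (forall i, (i < n)%N -> - (pi / 2) <= c + 2 * h * i%:R <= pi / 2) ->
  (forall i, 0 <= q i <= 1) ->
  (\sum_(i < n) q i * cos (c + 2 * h * i%:R)) * sin h <=
    sin a + (h * \sum_(i < n) q i - a) * cos a.
Proof.
move=> a0 api h0 hpi c_range q01.
have api' : a <= pi by have := pi_gt0 R; lra.
pose f k := psi_clamp a (c + 2 * h * k%:R - h).
have term (i : 'I_n) : q i * cos (c + 2 * h * i%:R) * sin h <=
    q i * (h * cos a) + (f i.+1 - f i) / 2.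
  have /andP[g1 g2] := c_range i (ltn_ord i).
  have -> : f i.+1 = psi_clamp a ((c + 2 * h * i%:R) + h).
    by rewrite /f -addn1 natrD; congr psi_clamp; ring.
  by apply: weighted_cos_sin_le => //; lra.
rewrite mulr_suml; apply: (le_trans (ler_sum _ (fun i _ => term i))).
rewrite big_split /= -!big_distrl /=.
rewrite -(big_mkord xpredT (fun i => f i.+1 - f i)) telescope_sumr //.
have := psi_clamp_bounds (c + 2 * h * n%:R - h) a0 api'.
have := psi_clamp_bounds (c + 2 * h * 0%:R - h) a0 api'.
rewrite /f /psi sinN; lra.
Qed.

End SineIncrements.

Lemma sum_rotate (V : nmodType) (F : nat -> V) n k :
  (forall j, F (j + n)%N = F j) -> \sum_(i < n) F (i + k)%N = \sum_(i < n) F i.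
Proof.
move=> Fper; elim: k => [|k IHk]; first by under eq_bigr do rewrite addn0.
case: n Fper IHk => [|n] Fper IHk; first by rewrite !big_ord0.
rewrite -IHk big_ord_recr big_ord_recl /= addrC; congr (_ + _).
  by rewrite add0n -[RHS]Fper; congr F; rewrite addnC addSn addnS.
by apply: eq_bigr => i _; rewrite addSnnS.
Qed.

Section HalfCircleSums.
Variable R : realType.
Implicit Types a d u v x : R.

Lemma lincomb_cos_sin_polar u v : exists2 phi, - (pi / 2) <= phi <= pi / 2 &
  forall th, `|cos th * u + sin th * v| = Num.sqrt (u ^+ 2 + v ^+ 2) * `|cos (th - phi)|.
Proof.
wlog u0 : u v / 0 <= u.
  move=> wlog_u; have [|u_lt0] := lerP 0 u; first exact: wlog_u.
  have [|phi phiI polar] := wlog_u (- u) (- v); first lra.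
  exists phi => // th; rewrite -(sqrrN u) -(sqrrN v) -polar -normrN.
  by congr `|_|; ring.
set r := Num.sqrt _.
have r2 : r ^+ 2 = u ^+ 2 + v ^+ 2 by rewrite sqr_sqrtr // addr_ge0 ?sqr_ge0.
have [r0|r_neq0] := eqVneq r 0.
  exists 0 => [|th]; first by have := pi_gt0 R; lra.
  have [-> ->] : u = 0 /\ v = 0 by move: r2; rewrite r0; nra.
  by rewrite r0 !mulr0 !mul0r addr0 normr0.
have r_gt0 : 0 < r by rewrite lt_def r_neq0 sqrtr_ge0.
have vr1 : -1 <= v / r <= 1.
  have : v ^+ 2 <= r ^+ 2 by rewrite r2; have := sqr_ge0 u; lra.
  by rewrite ler_pdivlMr ?ler_pdivrMr //; nra.
exists (asin (v / r)); first by rewrite asin_geNpi2 ?asin_lepi2.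
have sin_phi : sin (asin (v / r)) = v / r by rewrite asinK // in_itv.
have cos_phi : cos (asin (v / r)) = u / r.
  rewrite cos_asin // (_ : 1 - (v / r) ^+ 2 = (u / r) ^+ 2).
    by rewrite sqrtr_sqr ger0_norm // divr_ge0 // ltW.
  by rewrite !expr_div_n r2; field; rewrite -r2 expf_neq0.
move=> th; rewrite cosB sin_phi cos_phi -[X in X * `|_|](ger0_norm (ltW r_gt0)) -normrM.
by congr `|_|; field.
Qed.

Lemma exists_grid_point d x (N : nat) : 0 < d -> 0 <= x -> x <= d * N%:R ->
  exists k : nat, x <= d * k%:R <= x + d.
Proof.
move=> d0 x0 xN; have exN : exists k, x <= d * k%:R by exists N.
case: (ex_minnP exN) => k xk k_min; exists k; rewrite xk /=.
case: k xk k_min => [|k] xk k_min; first by rewrite mulr0; lra.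
have : ~~ (x <= d * k%:R) by apply/negP => /k_min; rewrite ltnn.
by rewrite -ltNge -[k.+1%:R]natr1 mulrDr mulr1 => ?; lra.
Qed.

Lemma half_step_bounds n : (0 < n)%N -> 0 < @pi R / (2 * n%:R) <= pi / 2.
Proof.
move=> n_gt0; have pi0 := pi_gt0 R; have n1 : (1 : R) <= n%:R by rewrite ler1n.
rewrite divr_gt0 ?mulr_gt0 ?ltr0n //= ler_pdivrMr ?mulr_gt0 ?ltr0n //.
nra.
Qed.

Lemma sum_abs_cos_theta_le n (q : 'I_n -> R) phi a : (0 < n)%N ->
  - (pi / 2) <= phi <= pi / 2 -> 0 <= a -> a <= pi / 2 ->
  (forall y, 0 <= q y <= 1) ->
  (\sum_(y < n) q y * `|cos (@theta R n y - phi)|) * sin (pi / (2 * n%:R))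
    <= sin a + (pi / (2 * n%:R) * \sum_(y < n) q y - a) * cos a.
Proof.
move=> n_gt0 /andP[phi1 phi2] a0 api q01.
have /andP[h0 hpi] := half_step_bounds n_gt0.
set h := pi / (2 * n%:R) in h0 hpi *.
have n_neq0 : n%:R != 0 :> R by rewrite pnatr_eq0 -lt0n.
have hn : 2 * h * n%:R = pi by rewrite /h; field.
have theta_h (y : nat) : @theta R n y = 2 * h * y%:R by rewrite /theta /h; field.
pose qmod (j : nat) := q (Ordinal (ltn_pmod j n_gt0)).
have qmod_ord (y : 'I_n) : qmod y = q y by congr q; apply: val_inj; rewrite /= modn_small.
have qmod_per j : qmod (j + n)%N = qmod j by congr q; apply: val_inj; rewrite /= modnDr.
pose F (j : nat) := qmod j * `|cos (2 * h * j%:R - phi)|.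
have F_per j : F (j + n)%N = F j.
  rewrite /F qmod_per natrD mulrDr hn (_ : _ + pi - phi = 2 * h * j%:R - phi + pi).
    by rewrite cosDpi normrN.
  by ring.
(* Rotate the indices so that all angles [c + 2 h i] lie in [-pi/2, pi/2],
   where [|cos|] is [cos]. *)
have [k /andP[k_lo k_hi]] :=
  @exists_grid_point (2 * h) (phi + pi / 2) n ltac:(lra) ltac:(lra) ltac:(lra).
set c := 2 * h * k%:R - phi - pi.
have c_range i : (i < n)%N -> - (pi / 2) <= c + 2 * h * i%:R <= pi / 2.
  move=> i_lt; have iln : (i%:R : R) + 1 <= n%:R by rewrite natr1 ler_nat.
  have : 0 <= 2 * h * i%:R by rewrite mulr_ge0 ?ler0n //; lra.
  have : 2 * h * i%:R <= 2 * h * (n%:R - 1) by apply: ler_wpM2l; lra.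
  by rewrite mulrBr mulr1 hn /c => *; apply/andP; split; lra.
have -> : \sum_(y < n) q y * `|cos (@theta R n y - phi)| =
    \sum_(i < n) qmod (i + k)%N * cos (c + 2 * h * i%:R).
  transitivity (\sum_(i < n) F i).
    by apply: eq_bigr => y _; rewrite /F qmod_ord theta_h.
  rewrite -(sum_rotate k F_per); apply: eq_bigr => i _.
  rewrite /F (_ : 2 * h * (i + k)%N%:R - phi = c + 2 * h * i%:R + pi).
    by rewrite cosDpi normrN ger0_norm // cos_ge0_pihalf // c_range.
  by rewrite natrD /c; ring.
have -> : \sum_(y < n) q y = \sum_(i < n) qmod (i + k)%N.
  by rewrite (sum_rotate k qmod_per); apply: eq_bigr => y _; rewrite qmod_ord.
by apply: (sum_cos_window_le (q := fun i => qmod (i + k)%N)) => // j; apply: q01.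
Qed.

Lemma sum_abs_lincomb_theta_le n (q : 'I_n -> R) u v t a : (0 < n)%N ->
  u ^+ 2 + v ^+ 2 <= t ^+ 2 -> 0 <= t -> 0 <= a -> a <= pi / 2 ->
  (forall y, 0 <= q y <= 1) ->
  (\sum_(y < n) q y * `|cos (@theta R n y) * u + sin (@theta R n y) * v|)
      * sin (pi / (2 * n%:R))
    <= t * (sin a + (pi / (2 * n%:R) * \sum_(y < n) q y - a) * cos a).
Proof.
move=> n_gt0 uvt t0 a0 api q01.
have [phi phiI polar] := lincomb_cos_sin_polar u v.
have := sum_abs_cos_theta_le n_gt0 phiI a0 api q01.
set S := \sum_(y < n) _ * _; set B := sin a + _.
have -> : \sum_(y < n) q y * `|cos (@theta R n y) * u + sin (@theta R n y) * v| =
    Num.sqrt (u ^+ 2 + v ^+ 2) * S.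
  by rewrite mulr_sumr; apply: eq_bigr => y _; rewrite polar mulrCA.
have S_ge0 : 0 <= S * sin (pi / (2 * n%:R)).
  rewrite mulr_ge0 ?sumr_ge0 // => [y _|]; first by case/andP: (q01 y) => *; rewrite mulr_ge0.
  have /andP[h0 h1] := half_step_bounds n_gt0.
  by rewrite sin_ge0_pi // ltW //= (le_trans h1) //; have := pi_gt0 R; lra.
move=> SB; rewrite -mulrA; apply: ler_pM; rewrite ?sqrtr_ge0 //.
by rewrite -(ger0_norm t0) -sqrtr_sqr ler_sqrt ?sqr_ge0.
Qed.

Lemma norm_sum2_le n m (d q g : 'I_n -> 'I_m -> R) :
  (forall y l, `|d y l| <= q y l) ->
  `|\sum_(y < n) \sum_(l < m) d y l * g y l| <= \sum_(l < m) \sum_(y < n) q y l * `|g y l|.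
Proof.
move=> dq; rewrite [X in _ <= X]exchange_big /=; apply: le_trans (ler_norm_sum _ _ _) _.
apply: ler_sum => y _; apply: le_trans (ler_norm_sum _ _ _) _.
by apply: ler_sum => l _; rewrite normrM ler_wpM2r.
Qed.

Lemma averaged_lincomb_bound n m (n_gt0 : (0 < n)%N) (z x t : 'I_m -> R)
    (q d : 'I_n -> 'I_m -> R) :
  (forall l, 0 <= t l) -> (forall l, z l ^+ 2 + x l ^+ 2 <= t l ^+ 2) ->
  \sum_(l < m) t l = 1 -> (forall y l, `|d y l| <= q y l <= 1) ->
  `| n%:R^-1 * \sum_(y < n) \sum_(l < m) d y l *
        (cos (@theta R n y) * z l + sin (@theta R n y) * x l) |
  <= sin (pi / 2 * (n%:R^-1 * \sum_(y < n) \sum_(l < m) q y l * t l))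
      / (n%:R * sin (pi / (2 * n%:R))).
Proof.
move=> t_ge0 zxt t_sum1 dq.
have /andP[h0 hpi] := half_step_bounds n_gt0.
set h := pi / (2 * n%:R) in h0 hpi *.
pose g y l := cos (@theta R n y) * z l + sin (@theta R n y) * x l.
have n_pos : (0 : R) < n%:R by rewrite ltr0n.
have sh0 : 0 < sin h by apply: sin_gt0_pi; rewrite h0 /=; have := pi_gt0 R; lra.
have q01 y l : 0 <= q y l <= 1.
  by have /andP[dq1 ->] := dq y l; rewrite (le_trans _ dq1).
set T := \sum_(y < n) \sum_(l < m) q y l * t l.
set a := pi / 2 * (n%:R^-1 * T).
have haT : h * T = a by rewrite /a /h; field; lra.
have T_ge0 : 0 <= T.
  apply: sumr_ge0 => y _; apply: sumr_ge0 => l _.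
  by case/andP: (q01 y l) => *; rewrite mulr_ge0.
have T_le : T <= n%:R.
  have -> : n%:R = \sum_(y < n) \sum_(l < m) t l :> R.
    by rewrite t_sum1 sumr_const card_ord.
  apply: ler_sum => y _; apply: ler_sum => l _.
  by rewrite ler_piMl //; case/andP: (q01 y l).
have a0 : 0 <= a by rewrite -haT mulr_ge0 // ltW.
have api : a <= pi / 2.
  have hn : h * n%:R = pi / 2 by rewrite /h; field; lra.
  by rewrite -haT -hn ler_wpM2l // ltW.
rewrite ler_pdivlMr ?mulr_gt0 // normrM ger0_norm ?invr_ge0 ?ler0n //.
rewrite mulrACA mulVf ?mul1r ?lt0r_neq0 //.
have dq' y l : `|d y l| <= q y l by case/andP: (dq y l).
apply: (le_trans (ler_wpM2r (ltW sh0) (norm_sum2_le g dq'))); rewrite mulr_suml.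
apply: le_trans
  (_ : \sum_(l < m) t l * (sin a + (h * \sum_(y < n) q y l - a) * cos a) <= _).
  apply: ler_sum => l _.
  exact: (sum_abs_lincomb_theta_le (q := q^~ l) n_gt0 (zxt l) (t_ge0 l) a0 api).
rewrite (eq_bigr (fun l =>
  (sin a - a * cos a) * t l + h * cos a * (t l * \sum_(y < n) q y l))); last first.
  by move=> l _; ring.
rewrite big_split /= -!mulr_sumr t_sum1.
have -> : \sum_(l < m) t l * \sum_(y < n) q y l = T.
  rewrite /T exchange_big; apply: eq_bigr => l _; rewrite mulr_sumr.
  by apply: eq_bigr => y _; rewrite mulrC.
have : h * cos a * T = a * cos a by rewrite -haT; ring.
lra.
Qed.

End HalfCircleSums.

Section QubitMatrices.
Variable R : realType.
Implicit Types A : 'M[R[i]]_2.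

Definition bloch_z A : R := complex.Re (A ord0 ord0) - complex.Re (A ord_max ord_max).
Definition bloch_x A : R := complex.Re (A ord0 ord_max + A ord_max ord0).

Lemma ord2_widen_max : widen_ord (leqnSn 1) ord_max = ord0 :> 'I_2.
Proof. exact: val_inj. Qed.

Lemma Re_realM (r : R) (x : R[i]) : complex.Re ((r%:C)%C * x) = r * complex.Re x.
Proof. by case: x => a b /=; ring. Qed.

Lemma Re_mxtrace2 A :
  complex.Re (\tr A) = complex.Re (A ord0 ord0) + complex.Re (A ord_max ord_max).
Proof. by rewrite /mxtrace !big_ord_recr big_ord0 /= add0r raddfD ord2_widen_max. Qed.

Lemma Re_mxtrace_pauli (c s : R) A :
  complex.Re (\tr (((c%:C)%C *: pauliZ R + (s%:C)%C *: pauliX R) *m A)) =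
    c * bloch_z A + s * bloch_x A.
Proof.
rewrite /mxtrace !big_ord_recr !big_ord0 /= !mxE !big_ord_recr !big_ord0 /= !mxE /=.
rewrite ord2_widen_max /bloch_z /bloch_x.
by rewrite !(mulr1, mulr0, addr0, add0r, mulrN1, mulNr) !raddfD !raddfN /= !Re_realM; ring.
Qed.

Lemma psd2_quad_form A (s t : R) : psd2 A ->
  0 <= complex.Re (A ord0 ord0) * s ^+ 2 + complex.Re (A ord_max ord_max) * t ^+ 2
     + bloch_x A * s * t.
Proof.
case=> _ /(_ (\col_(i < 2) (if val i == 0%N then s else t)%:C%C)).
rewrite lecE => /andP[_].
rewrite /adj_mx !mxE !big_ord_recr !big_ord0 /= !mxE /= !big_ord_recr !big_ord0 /= !mxE /=.
rewrite ord2_widen_max /bloch_x.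
case: (A ord0 ord0) (A ord0 ord_max) (A ord_max ord0) (A ord_max ord_max)
  => [a1 a2] [b1 b2] [c1 c2] [d1 d2] /=.
by move/le_trans; apply; rewrite le_eqVlt; apply/orP; left; apply/eqP; ring.
Qed.

Lemma nonneg_quad_form_disc (al de x : R) :
  (forall s t, 0 <= al * s ^+ 2 + de * t ^+ 2 + x * s * t) ->
  [/\ 0 <= al, 0 <= de & x ^+ 2 <= 4 * al * de].
Proof.
move=> Q; have al0 : 0 <= al by have := Q 1 0; lra.
have de0 : 0 <= de by have := Q 0 1; lra.
split=> //; have q1 := Q x (- 2 * al); have q2 := Q (- 2 * de) x; have q3 := Q x (-2).
have [al_eq0|al_neq0] := eqVneq al 0.
  have [de_eq0|de_neq0] := eqVneq de 0; first by rewrite al_eq0 de_eq0 in q3 *; nra.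
  have : 0 < de by rewrite lt_def de_neq0 de0.
  nra.
have : 0 < al by rewrite lt_def al_neq0 al0.
nra.
Qed.

Lemma psd2_bloch A : psd2 A ->
  0 <= complex.Re (\tr A) /\ bloch_z A ^+ 2 + bloch_x A ^+ 2 <= complex.Re (\tr A) ^+ 2.
Proof.
move=> /psd2_quad_form Q; have [al0 de0 disc] := nonneg_quad_form_disc Q.
by rewrite Re_mxtrace2 /bloch_z; split; nra.
Qed.

Section LinearCombinations.
Variables (m : nat) (c : 'I_m -> R) (A : 'I_m -> 'M[R[i]]_2).
Let L := \sum_(l < m) (c l)%:C%C *: A l.

Lemma Re_lincomb_entry i j : complex.Re (L i j) = \sum_(l < m) c l * complex.Re (A l i j).
Proof. by rewrite summxE raddf_sum; apply: eq_bigr => l _; rewrite mxE; exact: Re_realM. Qed.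

Lemma bloch_z_lincomb : bloch_z L = \sum_(l < m) c l * bloch_z (A l).
Proof.
rewrite /bloch_z !Re_lincomb_entry -sumrB.
by apply: eq_bigr => l _; rewrite mulrBr.
Qed.

Lemma bloch_x_lincomb : bloch_x L = \sum_(l < m) c l * bloch_x (A l).
Proof.
rewrite /bloch_x raddfD /= !Re_lincomb_entry -big_split.
by apply: eq_bigr => l _; rewrite raddfD mulrDr.
Qed.

Lemma Re_mxtrace_lincomb :
  complex.Re (\tr L) = \sum_(l < m) c l * complex.Re (\tr (A l)).
Proof.
rewrite Re_mxtrace2 !Re_lincomb_entry -big_split.
by apply: eq_bigr => l _; rewrite Re_mxtrace2 mulrDr.
Qed.

End LinearCombinations.

End QubitMatrices.

Section Assemblages.
Variables (R : realType) (n m : nat).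
Variables (rho : 'I_m -> 'M[R[i]]_2) (p : 'I_n -> 'I_m -> 'I_3 -> R).

Lemma assembB y : assemb rho p out0 y - assemb rho p out1 y =
  \sum_(l < m) (p y l out0 - p y l out1)%:C%C *: rho l.
Proof. by rewrite /assemb -sumrB; apply: eq_bigr => l _; rewrite raddfB scalerBl. Qed.

Lemma assembD y : assemb rho p out0 y + assemb rho p out1 y =
  \sum_(l < m) (p y l out0 + p y l out1)%:C%C *: rho l.
Proof. by rewrite /assemb -big_split; apply: eq_bigr => l _; rewrite raddfD scalerDl. Qed.

Lemma W_nE : W_n rho p = n%:R^-1 * \sum_(y < n) \sum_(l < m) (p y l out0 - p y l out1) *
  (cos (@theta R n y) * bloch_z (rho l) + sin (@theta R n y) * bloch_x (rho l)).
Proof.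
rewrite /W_n; congr (_ * _); apply: eq_bigr => y _.
rewrite Re_mxtrace_pauli assembB bloch_z_lincomb bloch_x_lincomb !mulr_sumr -big_split.
by apply: eq_bigr => l _ /=; ring.
Qed.

Lemma T_nE : T_n rho p =
  n%:R^-1 * \sum_(y < n) \sum_(l < m) (p y l out0 + p y l out1) * complex.Re (\tr (rho l)).
Proof.
by rewrite /T_n; congr (_ * _); apply: eq_bigr => y _; rewrite assembD Re_mxtrace_lincomb.
Qed.

End Assemblages.

Lemma out01_bounds (R : realType) (w : 'I_3 -> R) :
  (forall b, 0 <= w b) -> \sum_(b < 3) w b = 1 ->
  `|w out0 - w out1| <= w out0 + w out1 <= 1.
Proof.
move=> w_ge0 w_sum1; have := w_ge0 out0; have := w_ge0 out1.
have : w out0 + w out1 <= 1.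
  by rewrite -w_sum1 (bigD1 out0) // (bigD1 out1) //= addrA lerDl sumr_ge0.
by rewrite ler_norml => *; apply/andP; split; [apply/andP; split|]; lra.
Qed.

Theorem mainTheorem8 (R : realType) (n m : nat) (hn : (1 <= n)%N)
  (rho : 'I_m -> 'M[R[i]]_2) (p : 'I_n -> 'I_m -> 'I_3 -> R) :
  is_LHS rho p ->
  `|W_n rho p| <= sin (pi / 2 * T_n rho p) / (n%:R * sin (pi / (2 * n%:R))).
Proof.
move=> [rho_psd [tr_sum1 [p_ge0 p_sum1]]].
rewrite W_nE T_nE; apply: averaged_lincomb_bound => //.
- by move=> l; have [] := psd2_bloch (rho_psd l).
- by move=> l; have [] := psd2_bloch (rho_psd l).
- by rewrite -raddf_sum tr_sum1.
- by move=> y l; apply: out01_bounds.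
Qed.
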